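(* Let $X$ be a Hausdorff space and $\mathcal I$ a ccc $\sigma$-ideal on $X$ with a Borel base. Then $\mathcal I$ is $\mathcal A$-ccc for the family $\mathcal A$ of all $K$-analytic subsets of $X$; that is, every family of pairwise disjoint $K$-analytic subsets of $X$ not belonging to $\mathcal I$ is countable.
   Context: A Tychonoff space is $K$-analytic if it is a continuous image of a Lindelöf Čech-complete space; a subset is $K$-analytic if it is so in the subspace topology. A $\sigma$-ideal on $X$ is a family closed under countable unions and subsets with $X=\bigcup\mathcal I$ and $X\notin\mathcal I$. It has a Borel base if every member is contained in a Borel member. It is ccc if every family of pairwise disjoint Borel subsets of $X$ not in $\mathcal I$ is countable. *)

From HB Require Import structures.
From mathcomp Require Import all_boot all_order all_algebra.
From mathcomp Require Import all_classical all_reals all_analysis.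
From mathcomp Require Import borel_hierarchy.
Set Implicit Arguments. Unset Strict Implicit. Unset Printing Implicit Defensive.
Import numFieldNormedType.Exports.
Local Open Scope classical_set_scope.

Definition Borel {T : topologicalType} : set (set T) :=
  <<s [set U : set T | open U] >>.

Definition lindelof (Y : topologicalType) : Prop :=
  forall C : set (set Y), (forall U, C U -> open U) ->
    \bigcup_(U in C) U = [set: Y] ->
    exists2 D : set (set Y), D `<=` C & countable D /\ \bigcup_(U in D) U = [set: Y].

Definition embedding {Y K : topologicalType} (e : Y -> K) : Prop :=
  injective e /\ continuous e /\
  forall U : set Y, open U -> exists2 V : set K, open V & U = e @^-1` V.

(* Cech-complete: Tychonoff space which is a G_delta in some (equivalently,
   every, Engelking 3.9.1) Hausdorff compactification *)
Definition cech_complete (Y : topologicalType) : Prop :=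
  hausdorff_space Y /\ completely_regular_space Y /\
  exists (K : topologicalType) (e : Y -> K),
    [/\ compact [set: K], hausdorff_space K, embedding e & Gdelta (range e)].

Definition K_analytic {X : topologicalType} (A : set X) : Prop :=
  exists (Y : topologicalType) (f : Y -> X),
    [/\ lindelof Y, cech_complete Y, continuous f & range f = A].

Definition pairwise_disjoint {X : Type} (F : set (set X)) : Prop :=
  forall A B, F A -> F B -> A <> B -> A `&` B = set0.

Definition sigma_ideal {X : Type} (I : set (set X)) : Prop :=
  [/\ (forall A B, I A -> B `<=` A -> I B),
      (forall F : (set X)^nat, (forall n, I (F n)) -> I (\bigcup_n F n)),
      \bigcup_(A in I) A = [set: X] & ~ I [set: X]].

Definition has_Borel_base {X : topologicalType} (I : set (set X)) : Prop :=
  forall A, I A -> exists B, [/\ Borel B, I B & A `<=` B].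

Definition A_ccc {X : Type} (Acl : set (set X)) (I : set (set X)) : Prop :=
  forall F : set (set X), F `<=` Acl -> (forall A, F A -> ~ I A) ->
    pairwise_disjoint F -> countable F.

Definition ccc {X : topologicalType} (I : set (set X)) : Prop :=
  A_ccc (@Borel X) I.

From mathcomp Require Import all_boot all_order all_algebra.
From mathcomp Require Import all_classical all_reals all_analysis.
From mathcomp Require Import borel_hierarchy.
Set Implicit Arguments. Unset Strict Implicit. Unset Printing Implicit Defensive.
Local Open Scope classical_set_scope.

(* A K-analytic subset of a Hausdorff space is the Suslin operation applied to
   a scheme of closed sets: refine a G_delta presentation of the Lindelof
   Cech-complete domain inside its compactification by countable covers, and
   recover points of the image from cluster points in the compactification.
   For a ccc sigma-ideal I, every set has a Borel envelope modulo I (exhaust its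
   complement by a maximal disjoint family of Borel sets not in I); gluing the
   envelopes of the tails of a Suslin scheme gives every Suslin set of Borel
   sets a Borel hull H with H \ A in I.  Hulls of pairwise disjoint sets are
   almost disjoint modulo I, and ccc makes such a family of hulls countable. *)

Lemma bigcup_countable_seq (J T : Type) (D : set J) (F : J -> set T) :
  countable D -> exists E : (set T)^nat,
    (forall n, E n = set0 \/ exists2 j, D j & E n = F j) /\
    \bigcup_(j in D) F j = \bigcup_n E n.
Proof.
elim/Ppointed: J => J in D F *.
  move=> _; exists (fun=> set0); split; first by left.
  by rewrite emptyE bigcup_set0 bigcup0.
move=> /countable_bijP[B /ppcard_eqP[g]].
exists (fun n => if n \in B then F (g^-1%FUN n) else set0); split.
  move=> n; case: ifPn => [/set_mem Bn|_]; last by left.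
  by right; exists (g^-1%FUN n) => //; exact: funS.
by rewrite (reindex_bigcup g^-1%FUN B D) // bigcup_mkcond.
Qed.

Lemma bigcup_countable_closed (J T : Type) (P : set (set T)) (D : set J)
    (F : J -> set T) :
  P set0 -> (forall G : (set T)^nat, (forall n, P (G n)) -> P (\bigcup_n G n)) ->
  countable D -> (forall j, D j -> P (F j)) -> P (\bigcup_(j in D) F j).
Proof.
move=> P0 PU /(bigcup_countable_seq F)[E [EF ->]] PF; apply: PU => n.
by case: (EF n) => [->|[j Dj ->]]; [|apply: PF].
Qed.

Lemma exists_maximal_disjoint_subfamily (T : Type) (Q : set (set T)) :
  exists G, [/\ G `<=` Q, pairwise_disjoint G &
    forall C, Q C -> (forall D, G D -> C `&` D = set0) -> G C].
Proof.
pose P := [set G : set (set T) | G `<=` Q /\ pairwise_disjoint G].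
have chainP (Fam : set (set (set T))) :
    Fam `<=` P -> total_on Fam subset -> P (\bigcup_(G in Fam) G).
  move=> FamP Famtot; split; first by move=> C [G /FamP[GQ _] /GQ].
  move=> A B [G1 FG1 G1A] [G2 FG2 G2B].
  have [G12|G21] := Famtot G1 G2 FG1 FG2.
  - exact: (FamP G2 FG2).2 _ _ (G12 _ G1A) G2B.
  - exact: (FamP G1 FG1).2 _ _ G1A (G21 _ G2B).
have [G [[GQ Gdisj] Gmax]] := Zorn_bigcup chainP.
exists G; split => // C QC Cdisj; apply: contrapT => GNC.
apply: (Gmax (G `|` [set C])).
  by split=> [D GD|GCG]; [left|apply: GNC; apply: GCG; right].
split=> [D [/GQ //|->//]|].
move=> A B [GA|->] [GB|->] // AB; [exact: Gdisj | rewrite setIC|]; exact: Cdisj.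
Qed.

Section Borel.
Variable X : topologicalType.
Implicit Types A B : set X.

Lemma Borel_setC A : Borel A -> Borel (~` A).
Proof. by rewrite -setTD; exact: sigma_algebraCD. Qed.

Lemma Borel_setI A B : Borel A -> Borel B -> Borel (A `&` B).
Proof.
have [_ _ _ +] := (sigma_algebraP (fun A _ => @subsetT _ A)).1
  (@smallest_sigma_algebra X setT [set U | open U]).
exact.
Qed.

Lemma Borel_setD A B : Borel A -> Borel B -> Borel (A `\` B).
Proof. by move=> BA /Borel_setC BB; rewrite setDE; exact: Borel_setI. Qed.

Lemma Borel_bigcup (J : Type) (D : set J) (F : J -> set X) :
  countable D -> (forall j, D j -> Borel (F j)) -> Borel (\bigcup_(j in D) F j).
Proof.
by apply: bigcup_countable_closed; [exact: sigma_algebra0|exact: sigma_algebra_bigcup].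
Qed.

Lemma Borel_closed A : closed A -> Borel A.
Proof.
move=> /closed_openC oAC; rewrite -[A]setCK; apply: Borel_setC.
exact: sub_sigma_algebra.
Qed.

End Borel.

Definition suslin (T : Type) (P : seq nat -> set T) : set T :=
  [set x | exists sg : nat -> nat, forall n, P (mkseq sg n) x].

Definition suslin_defect (T : Type) (H : seq nat -> set T) (s : seq nat) :=
  H s `\` \bigcup_k H (rcons s k).

Section Suslin.
Variable T : Type.
Implicit Types P H : seq nat -> set T.

Lemma mkseqSl (sg : nat -> nat) n :
  mkseq sg n.+1 = sg 0 :: mkseq (sg \o succn) n.
Proof. by elim: n => [//|n IH]; rewrite mkseqS IH mkseqS. Qed.

Lemma suslinS P Q : (forall s, P s `<=` Q s) -> suslin P `<=` suslin Q.
Proof. by move=> PQ x [sg Psg]; exists sg => n; apply: PQ. Qed.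

Lemma suslin_shift_sub P s :
  suslin (fun t => P (s ++ t)) `<=` \bigcup_k suslin (fun t => P (rcons s k ++ t)).
Proof.
move=> x [sg Psg]; exists (sg 0) => //; exists (sg \o succn) => n.
by rewrite cat_rcons -mkseqSl.
Qed.

Lemma suslin_shift_root P s : suslin (fun t => P (s ++ t)) `<=` P s.
Proof. by move=> x [sg /(_ 0)]; rewrite cats0. Qed.

Lemma suslin_defect_sub H :
  H [::] `\` \bigcup_s suslin_defect H s `<=` suslin H.
Proof.
move=> x [Hx nDx].
have step s : exists k, H s x -> H (rcons s k) x.
  have [[k _ Hkx]|nHx] := pselect ((\bigcup_k H (rcons s k)) x); first by exists k.
  by exists 0 => Hsx; exfalso; apply: nDx; exists s.
have [g gP] := choice step.
pose pre := fix pre n := if n is m.+1 then rcons (pre m) (g (pre m)) else [::].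
have preE n : mkseq (g \o pre) n = pre n.
  by elim: n => [//|n IH]; rewrite mkseqS IH.
by exists (g \o pre) => n; rewrite preE; elim: n => [//|n IH]; apply: gP.
Qed.

End Suslin.

Section CccSigmaIdeal.
Variables (X : topologicalType) (I : set (set X)).
Hypotheses (I_sub : forall A B, I A -> B `<=` A -> I B)
  (I_bigcup : forall F : (set X)^nat, (forall n, I (F n)) -> I (\bigcup_n F n))
  (I0 : I set0) (cccI : ccc I).

Lemma idealU A B : I A -> I B -> I (A `|` B).
Proof. by move=> IA IB; rewrite -bigcup2E; apply: I_bigcup => -[|[|]]. Qed.

Lemma ideal_bigcup (J : Type) (D : set J) (F : J -> set X) :
  countable D -> (forall j, D j -> I (F j)) -> I (\bigcup_(j in D) F j).
Proof. exact: bigcup_countable_closed. Qed.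

Lemma ccc_exhaustion (Q : set (set X)) :
  Q `<=` Borel -> (forall C D, Q C -> Borel D -> D `<=` C -> Q D) ->
  exists2 G : set (set X), G `<=` Q `\` I /\ countable G &
    forall C, Q C -> I (C `\` \bigcup_(D in G) D).
Proof.
move=> QB Qsub.
have [G [GQ Gdisj Gmax]] := exists_maximal_disjoint_subfamily (Q `\` I).
have Gc : countable G by apply: cccI => // [C /GQ[/QB]|C /GQ[]].
exists G => // C QC; apply: contrapT => IR.
pose R := C `\` \bigcup_(D in G) D.
have BR : Borel R.
  by apply: Borel_setD (QB _ QC) (Borel_bigcup Gc _) => D /GQ[/QB].
have GR : G R.
  apply: Gmax; first by split; [apply: (Qsub C) => // x [] | exact: (IR)].
  by move=> D GD; apply/seteqP; split=> x // [[_ nGx] Dx]; apply: nGx; exists D.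
have R0 : R = set0.
  by apply/seteqP; split=> x // [Cx nGx]; apply: (nGx); exists R.
by apply: IR; rewrite -/R R0.
Qed.

Lemma Borel_envelope (A : set X) :
  exists H, [/\ Borel H, A `<=` H & forall C, Borel C -> C `<=` H `\` A -> I C].
Proof.
pose Q := [set C | Borel C /\ C `&` A = set0].
have [G [GQ Gc] GI] : exists2 G : set (set X), G `<=` Q `\` I /\ countable G &
    forall C, Q C -> I (C `\` \bigcup_(D in G) D).
  apply: ccc_exhaustion => [C []//|C D [_ CA] BD DC].
  by split => //; apply: subsetI_eq0 DC (@subset_refl _ A) CA.
exists (~` \bigcup_(D in G) D); split.
- by apply: Borel_setC; apply: Borel_bigcup Gc _ => D /GQ[[]].
- by move=> x Ax [D /GQ[[_ /disjoints_subset DA] _] Dx]; exact: DA x Dx Ax.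
- move=> C BC CHA; apply: I_sub (GI C _) _.
    by split => //; apply/disjoints_subset => x /CHA[].
  by move=> x Cx; split => //; exact: (CHA x Cx).1.
Qed.

Definition Borel_hull (A H : set X) := [/\ Borel H, A `<=` H & I (H `\` A)].

Lemma suslin_Borel_hull (P : seq nat -> set X) :
  (forall s, Borel (P s)) -> exists H, Borel_hull (suslin P) H.
Proof.
move=> BP.
(* Envelope every tail of the scheme; off the countably many defects, a point
   of the root envelope descends along a branch. *)
pose As s := suslin (fun t => P (s ++ t)).
have [Env EnvP] := choice (fun s => Borel_envelope (As s)).
pose Hs s := Env s `&` P s.
have AsH s : As s `<=` Hs s.
  move=> x Ax; split; last exact: suslin_shift_root Ax.
  by have [_ + _] := EnvP s; apply.
have BH s : Borel (Hs s) by apply: Borel_setI (BP s); have [] := EnvP s.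
have ID s : I (suslin_defect Hs s).
  have [_ _ EnvI] := EnvP s; apply: EnvI.
    by apply: Borel_setD (BH s) (Borel_bigcup _ _) => //; exact: countableP.
  move=> x [[Envx _] nHx]; split => // Ax.
  have [k _ Akx] := suslin_shift_sub Ax.
  by apply: nHx; exists k => //; exact: AsH.
exists (Hs [::]); split => //; first exact: (AsH [::]).
apply: I_sub (ideal_bigcup (countableP [set: seq nat]) (fun s _ => ID s)) _.
move=> x [Hx nAx]; apply: contrapT => nDx; apply: nAx.
by apply: (suslinS (fun s => @subIsetr _ (Env s) (P s))); apply: suslin_defect_sub.
Qed.

Lemma almost_disjoint_countable (J : Type) (F : set J) (B : J -> set X) :
  (forall j, F j -> Borel (B j) /\ ~ I (B j)) ->
  (forall i j, F i -> F j -> i <> j -> I (B i `&` B j)) -> countable F.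
Proof.
move=> BF BI.
(* Each piece of an exhaustion by Borel subsets of the B j lies in at most one
   B j, and a B j containing no piece would be in I. *)
pose Q := [set C | Borel C /\ exists2 j, F j & C `<=` B j].
have [G [GQ Gc] GI] : exists2 G : set (set X), G `<=` Q `\` I /\ countable G &
    forall C, Q C -> I (C `\` \bigcup_(D in G) D).
  apply: ccc_exhaustion => [C []//|C D [_ [j Fj Cj]] BD DC].
  by split => //; exists j => //; exact: subset_trans DC Cj.
pose S C := [set j | F j /\ C `<=` B j].
have Sc C : G C -> countable (S C).
  move=> /GQ[_ nIC]; have [[j0 [Fj0 Cj0]]|nS] := pselect (exists j, S C j).
    apply: sub_countable (countable1 j0); apply: subset_card_le => j [Fj Cj].
    apply: contrapT => jj0; apply: nIC; apply: I_sub (BI _ _ Fj Fj0 jj0) _.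
    by rewrite subsetI; split.
  have -> : S C = set0 by apply/seteqP; split=> j // Sj; apply: nS; exists j.
  exact: countable0.
apply: sub_countable (bigcup_countable Gc Sc); apply: subset_card_le => j Fj.
apply: contrapT => nSj; have [BBj nIBj] := BF j Fj; apply: nIBj.
have IBG : I (B j `&` \bigcup_(C in G) C).
  rewrite setI_bigcupr; apply: (ideal_bigcup Gc) => C GC.
  have [[_ [i Fi Ci]] _] := GQ C GC.
  have ij : i <> j by move=> eij; apply: nSj; exists C => //; split; rewrite -?eij.
  by apply: I_sub (BI _ _ Fj Fi (nesym ij)) _; apply: setIS.
apply: I_sub (idealU (GI (B j) _) IBG) _; first by split => //; exists j.
by move=> x Bx; have [Gx|nGx] := pselect ((\bigcup_(C in G) C) x); [right|left].
Qed.

Lemma disjoint_Borel_hull_countable (F : set (set X)) :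
  pairwise_disjoint F -> (forall A, F A -> ~ I A) ->
  (forall A, F A -> exists H, Borel_hull A H) -> countable F.
Proof.
move=> Fdisj FnI Fhull.
have /choice[H HP] A : exists H, F A -> Borel_hull A H.
  have [/Fhull[H hullH]|nFA] := pselect (F A); first by exists H.
  by exists set0 => /nFA.
apply: (almost_disjoint_countable (B := H)).
  move=> A FA; have [BH AH _] := HP A FA; split => // IH.
  by apply: (FnI A FA); exact: I_sub IH AH.
move=> A A' FA FA' AA'; have [_ _ IHA] := HP A FA; have [_ _ IHA'] := HP A' FA'.
apply: I_sub (idealU IHA IHA') _ => x [Hx H'x].
have [Ax|nAx] := pselect (A x); [right|by left]; split => // A'x.
by have : (A `&` A') x by []; rewrite Fdisj.
Qed.

End CccSigmaIdeal.

Lemma lindelof_closure_cover (Y K : topologicalType) (e : Y -> K) (G : set K) :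
  lindelof Y -> compact [set: K] -> hausdorff_space K -> continuous e ->
  open G -> range e `<=` G ->
  exists E : (set K)^nat,
    (forall k, closure (E k) `<=` G) /\ (forall y, exists k, E k (e y)).
Proof.
move=> LY cK hK ce oG eG.
pose W := [set V : set K | open V /\ closure V `<=` G].
pose C := [set e @^-1` V | V in W].
have Copen U : C U -> open U.
  by move=> [V [oV _] <-]; exact: (proj1 (continuousP e) ce).
have Ccover : \bigcup_(U in C) U = [set: Y].
  apply/seteqP; split => // y _.
  have Gey : nbhs (e y) G by apply: open_nbhs_nbhs; split => //; apply: eG; exists y.
  have [V Vey cVG] := compact_regular hK cK (filterT : nbhs (e y) _) Gey.
  exists (e @^-1` interior V) => //; exists (interior V) => //; split.
    exact: open_interior.
  exact: subset_trans (closureS (@interior_subset _ _)) cVG.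
have [D DC [Dc Dcover]] := LY C Copen Ccover.
have /choice[w wP] U : exists V, C U -> W V /\ U = e @^-1` V.
  have [[V WV <-]|nCU] := pselect (C U); first by exists V.
  by exists set0 => /nCU.
have [E [EP Ecover]] := bigcup_countable_seq w Dc.
exists E; split => [k|y].
  case: (EP k) => [->|[U DU ->]]; first by rewrite closure0.
  by have [[_ ?] _] := wP U (DC U DU).
have [U DU Uy] : (\bigcup_(U in D) U) y by rewrite Dcover.
have : (\bigcup_(U in D) w U) (e y).
  by exists U => //; have [_ eU] := wP U (DC U DU); move: Uy; rewrite {1}eU.
by rewrite Ecover => -[k _ Eky]; exists k.
Qed.

Lemma embedding_cluster (Y K : topologicalType) (e : Y -> K) (F : set_system Y)
    (y : Y) :
  Filter F -> embedding e -> cluster (e @ F) (e y) -> cluster F y.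
Proof.
move=> FF [_ [_ eopen]] cl A B FA; rewrite nbhsE => -[U [oU Uy] UB].
have [V oV UV] := eopen U oU.
have Vey : nbhs (e y) V by apply: open_nbhs_nbhs; split => //; move: Uy; rewrite UV.
have eFA : F (e @^-1` (e @` A)) by apply: filterS FA => a Aa; exists a.
have [_ [[a Aa <-] Vea]] := cl _ _ eFA Vey.
by exists a; split => //; apply: UB; rewrite UV.
Qed.

Lemma continuous_cluster (Y X : topologicalType) (f : Y -> X) (F : set_system Y)
    (y : Y) :
  continuous f -> cluster F y -> cluster (f @ F) (f y).
Proof.
move=> cf cl A B FA Bfy; have [a [Aa Ba]] := cl _ _ FA (cf y _ Bfy).
by exists (f a).
Qed.

Lemma compact_embedding_limit (Y K X : topologicalType) (e : Y -> K) (f : Y -> X)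
    (T : (set Y)^nat) (x : X) :
  compact [set: K] -> embedding e -> hausdorff_space X -> continuous f ->
  (forall n m, (n <= m)%N -> T m `<=` T n) -> (forall n, closure (f @` T n) x) ->
  exists z, (forall n, closure (e @` T n) z) /\ (forall y, e y = z -> f y = x).
Proof.
move=> cK emb hX cf Tdecr xT.
pose F := filter_from [set p : nat * set X | nbhs x p.2]
  (fun p => T p.1 `&` f @^-1` p.2).
have FF : ProperFilter F.
  apply: filter_from_proper => [|[n O] /= Ox]; last first.
    by have [_ [[y Ty <-] Ofy]] := xT n O Ox; exists y.
  apply: filter_from_filter; first by exists (0%N, setT); exact: filterT.
  move=> [n O] [m O'] /= Ox O'x; exists (maxn n m, O `&` O'); first exact: filterI.
  move=> y [Ty [Oy O'y]]; split; split => //; apply: Tdecr Ty.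
  - exact: leq_maxl.
  - exact: leq_maxr.
have [z [_ clz]] := cK (e @ F) (fmap_proper_filter e FF) filterT.
exists z; split => [n|y eyz].
  rewrite clusterE in clz; apply: clz; exists (n, setT) => /=; first exact: filterT.
  by move=> y [Ty _]; exists y.
have Fx : f @ F --> x by move=> B Bx; exists (0%N, B) => // y [].
apply/esym/hX; apply: (cvg_cluster Fx); apply: continuous_cluster cf _.
by apply: embedding_cluster emb _; rewrite eyz.
Qed.

Lemma K_analytic_suslin (X : topologicalType) (A : set X) :
  hausdorff_space X -> K_analytic A ->
  exists P : seq nat -> set X, (forall s, closed (P s)) /\ A = suslin P.
Proof.
move=> hX [Y [f [LY [_ [_ [K [e [cK hK emb [G oG eG]]]]]] cf <-]]].
have eGi i : range e `<=` G i by rewrite eG => z /(_ i Logic.I).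
have /choice[E EP] i : exists E : (set K)^nat,
    (forall k, closure (E k) `<=` G i) /\ (forall y, exists k, E k (e y)).
  exact: lindelof_closure_cover emb.2.1 (oG i) (eGi i).
(* Branch sg selects E i (sg i) at level i; a cluster point of the images in K
   lies in every G i, hence in range e. *)
pose Ys s := [set y | forall i, (i < size s)%N -> E i (nth 0%N s i) (e y)].
exists (fun s => closure (f @` Ys s)); split => [s|]; first exact: closed_closure.
apply/seteqP; split.
  move=> _ [y _ <-]; have [sg sgP] := choice (fun i => (EP i).2 y).
  exists sg => n; apply: subset_closure; exists y => // i.
  by rewrite size_mkseq => ltin; rewrite nth_mkseq.
move=> x [sg xP].
have YsE n y : Ys (mkseq sg n) y <-> forall i, (i < n)%N -> E i (sg i) (e y).
  by rewrite /Ys size_mkseq; split=> Yy i lti; have := Yy i lti; rewrite nth_mkseq.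
have Ydecr n m : (n <= m)%N -> Ys (mkseq sg m) `<=` Ys (mkseq sg n).
  by move=> nm y /YsE Ymy; apply/YsE => i ltin; apply/Ymy/(leq_trans ltin).
have [z [zT zf]] := compact_embedding_limit cK emb hX cf Ydecr xP.
have [y _ eyz] : range e z.
  rewrite eG => i _; apply: ((EP i).1 (sg i)); apply: closureS (zT i.+1).
  by move=> _ [y /YsE Yy <-]; apply: Yy.
by exists y => //; exact: zf.
Qed.

Theorem lemma4p5 (X : topologicalType) (I : set (set X)) :
  hausdorff_space X -> sigma_ideal I -> has_Borel_base I -> ccc I ->
  A_ccc (@K_analytic X) I.
Proof.
move=> hX [I_sub I_bigcup Icover _] _ cccI F FK FnI Fdisj.
have [[x0 _]|noX] := pselect (exists x : X, True); last first.
  apply: sub_countable (countable1 (@set0 X)); apply: subset_card_le => A _.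
  by apply/seteqP; split=> x // _; apply: noX; exists x.
have I0 : I set0.
  have [A IA _] : (\bigcup_(A in I) A) x0 by rewrite Icover.
  exact: I_sub IA (@sub0set _ _).
apply: (disjoint_Borel_hull_countable I_sub I_bigcup I0 cccI Fdisj FnI) => A FA.
have [P [Pclosed ->]] := K_analytic_suslin hX (FK A FA).
exact: suslin_Borel_hull (fun s => Borel_closed (Pclosed s)).
Qed.
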